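(* Let $\mathbb{Z}_{(p_n)}$ be an odometer with scale $(p_n)$. Then $$\operatorname{Aut}^{(\infty)}(\mathbb{Z}_{(p_n)},+\mathbf{1})=\bigcup_{n=1}^{\infty}\operatorname{Aut}(\mathbb{Z}_{(p_n)},+p_n\mathbf{1}),$$ where the union is taken inside $\operatorname{Homeo}(\mathbb{Z}_{(p_n)})$. Moreover, the same equality holds with $(p_n)$ replaced by any scale $(s_n)$ equivalent to $(p_n)$, i.e. $\operatorname{Aut}^{(\infty)}(\mathbb{Z}_{(p_n)},+\mathbf{1})=\bigcup_{n}\operatorname{Aut}(\mathbb{Z}_{(p_n)},+s_n\mathbf{1})$.
   Context: A scale is a sequence $(p_n)$ of positive integers with $p_n\mid p_{n+1}$, not eventually constant. The odometer is $\mathbb{Z}_{(p_n)}=\{(x_n)\in\prod_n\mathbb{Z}/p_n\mathbb{Z}: x_{n+1}\equiv x_n\bmod p_n\}$; $\mathbf{1}=(1,1,\dots)$ and $+c\mathbf{1}$ denotes translation by $c\mathbf{1}$. Two scales $(p_n),(s_n)$ are equivalent if $\lim_n\nu_p(p_n)=\lim_n\nu_p(s_n)$ (in $\mathbb{N}\cup\{0,\infty\}$) for every prime $p$, $\nu_p$ being the $p$-adic valuation. $\operatorname{Aut}(X,T)$ is the group of homeomorphisms commuting with $T$ and $\operatorname{Aut}^{(\infty)}(X,T)=\bigcup_{n\ge1}\operatorname{Aut}(X,T^n)\subseteq\operatorname{Homeo}(X)$. *)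

From mathcomp Require Import all_boot.
Set Implicit Arguments. Unset Strict Implicit. Unset Printing Implicit Defensive.

Definition is_scale (p : nat -> nat) : Prop :=
  (forall n, 0 < p n) /\ (forall n, p n %| p n.+1) /\
  ~ (exists N, forall n, N <= n -> p n = p N).

Lemma scale_dvd p : is_scale p -> forall n, p n %| p n.+1.
Proof. by case=> _ []. Qed.

(* Equivalence of scales: for every prime q, the (monotone) limits of
   nu_q(p n) and nu_q(s n) in N u {oo} coincide; since both sequences are
   nondecreasing, the limit is the supremum, so equality of limits says that
   exactly the same values k are eventually reached. *)
Definition scale_equiv (p s : nat -> nat) : Prop :=
  forall q, prime q -> forall k,
    (exists n, k <= logn q (p n)) <-> (exists n, k <= logn q (s n)).

(* The odometer Z_(p_n): compatible sequences x n in Z/p_n Z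
   (represented by 0 <= x n < p n) with x (n+1) = x n mod p n. *)
Definition in_odo (p : nat -> nat) (x : nat -> nat) : Prop :=
  forall n, x n < p n /\ x n.+1 %% p n = x n.

Definition odo (p : nat -> nat) := {x : nat -> nat | in_odo p x}.

Definition coord p (x : odo p) (n : nat) : nat := proj1_sig x n.

Lemma add_in_odo p (Hp : forall n, p n %| p n.+1) (c : nat) (x : nat -> nat) :
  in_odo p x -> in_odo p (fun n => (x n + c) %% p n).
Proof.
move=> Hx n; have [lt e] := Hx n; split.
  by rewrite ltn_pmod // (leq_ltn_trans (leq0n _) lt).
by rewrite modn_dvdm // -modnDml e.
Qed.

Definition odo_add p (Hp : forall n, p n %| p n.+1) (c : nat) (x : odo p) : odo p :=
  exist _ (fun n => (coord x n + c) %% p n) (add_in_odo Hp c (proj2_sig x)).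

(* Continuity for the (subspace of the) product topology of the discrete
   spaces Z/p_n Z: each output coordinate is locally determined by finitely
   many input coordinates. *)
Definition odo_continuous p (f : odo p -> odo p) : Prop :=
  forall (x : odo p) (n : nat), exists m, forall y : odo p,
    (forall k, k <= m -> coord y k = coord x k) -> coord (f y) n = coord (f x) n.

Definition odo_homeo p (f : odo p -> odo p) : Prop :=
  exists g : odo p -> odo p,
    cancel f g /\ cancel g f /\ odo_continuous f /\ odo_continuous g.

Definition odo_Aut p (T : odo p -> odo p) (f : odo p -> odo p) : Prop :=
  odo_homeo f /\ forall x, f (T x) = T (f x).

Definition odo_Aut_inf p (T : odo p -> odo p) (f : odo p -> odo p) : Prop :=
  exists n, 0 < n /\ odo_Aut (iter n T) f.

From mathcomp Require Import all_boot.
From Stdlib Require Import Classical FunctionalExtensionality ProofIrrelevance.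

Set Implicit Arguments. Unset Strict Implicit. Unset Printing Implicit Defensive.

(* A continuous f commuting with +n1 commutes with +N1 as soon as N is
   reachable from multiples of n in every level Z/p_K, i.e. as soon as
   gcd(n, p_K) | N for all K: at level K pick c with n c = N mod p_K, so
   x + N1 and x + nc1 agree on the first K coordinates, and continuity
   transfers the commutation.  The divisors gcd(n, p_K) of n form a
   divisibility chain, hence stabilise at some g | p_K0; scale equivalence
   says that every prime power dividing some p_K divides some s_m, so g | s_m
   and f commutes with +s_m 1.  The converse holds because
   +s_m 1 = (+1)^(s_m). *)

Lemma scale_gt0 p : is_scale p -> forall n, 0 < p n.
Proof. by case. Qed.

Lemma dvdn_chain (p : nat -> nat) : (forall n, p n %| p n.+1) ->
  forall i j, i <= j -> p i %| p j.
Proof.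
move=> Hd i j /subnK <-; elim: (j - i) => [|d IH]; first by rewrite add0n.
by rewrite addSn; apply: dvdn_trans IH (Hd _).
Qed.

Lemma bounded_has_max (u : nat -> nat) b :
  (forall k, u k <= b) -> exists K, forall k, u k <= u K.
Proof.
elim: b => [|b IH] ub.
  by exists 0 => k; rewrite (leq_trans (ub k)).
have [[K uK] | no_top] := classic (exists K, u K = b.+1).
  by exists K => k; rewrite uK ub.
apply: IH => k; have := ub k; rewrite leq_eqVlt => /orP [/eqP uk | //].
by case: no_top; exists k.
Qed.

Lemma eventually_all (P : nat -> nat -> Prop) (l : seq nat) :
  (forall q i j, i <= j -> P q i -> P q j) ->
  (forall q, q \in l -> exists m, P q m) ->
  exists m, forall q, q \in l -> P q m.
Proof.
move=> Pmono; elim: l => [|a l IH] Pl; first by exists 0.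
have [m1 Pa] := Pl a (mem_head _ _).
have [m2 Pl'] : exists m, forall q, q \in l -> P q m.
  by apply: IH => q ql; apply: Pl; rewrite inE ql orbT.
exists (maxn m1 m2) => q; rewrite inE => /orP [/eqP -> | ql].
  by apply: Pmono Pa; rewrite leq_maxl.
by apply: Pmono (Pl' q ql); rewrite leq_maxr.
Qed.

Lemma eqmod_mul_gcd n m N :
  0 < n -> gcdn n m %| N -> exists c, n * c = N %[mod m].
Proof.
move=> n_gt0 /dvdnP [t ->]; case: (egcdnP m n_gt0) => km kn def_g _.
exists (km * t).
by rewrite mulnA (mulnC n) def_g mulnDl mulnAC -modnDml modnMl add0n mulnC.
Qed.

Section Odometer.

Variables (p : nat -> nat) (Hd : forall n, p n %| p n.+1).

Definition odo_commute (f : odo p -> odo p) (c : nat) : Prop :=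
  forall x, f (odo_add Hd c x) = odo_add Hd c (f x).

Lemma odo_eq (x y : odo p) : (forall k, coord x k = coord y k) -> x = y.
Proof.
case: x y => [x hx] [y hy] /= exy.
have exy' : x = y by apply: functional_extensionality.
by subst y; rewrite (proof_irrelevance _ hx hy).
Qed.

Lemma odo_add0 x : odo_add Hd 0 x = x.
Proof.
apply: odo_eq => k; rewrite /coord /= addn0 modn_small //.
by case: (proj2_sig x k).
Qed.

Lemma odo_addA a b x : odo_add Hd a (odo_add Hd b x) = odo_add Hd (b + a) x.
Proof. by apply: odo_eq => k; rewrite /coord /= modnDml addnA. Qed.

Lemma iter_odo_add1 n x : iter n (odo_add Hd 1) x = odo_add Hd n x.
Proof.
elim: n => [|n IH]; first by rewrite odo_add0.
by rewrite iterS IH odo_addA addn1.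
Qed.

Lemma odo_commuteM f n c : odo_commute f n -> odo_commute f (n * c).
Proof.
move=> fn; elim: c => [|c IH] x; first by rewrite muln0 !odo_add0.
by rewrite mulnS -odo_addA IH fn odo_addA.
Qed.

Lemma coord_odo_add_eqmod c c' x k K : k <= K -> c = c' %[mod p K] ->
  coord (odo_add Hd c x) k = coord (odo_add Hd c' x) k.
Proof.
move=> kK cc'; have dvd_k := dvdn_chain Hd kK.
by rewrite /coord /= -modnDmr -(modn_dvdm c dvd_k) cc' modn_dvdm // modnDmr.
Qed.

Lemma odo_commute_gcd f n N : 0 < n -> odo_continuous f -> odo_commute f n ->
  (forall K, gcdn n (p K) %| N) -> odo_commute f N.
Proof.
move=> n_gt0 f_cont fn gN x; apply: odo_eq => j.
have [M fM] := f_cont (odo_add Hd N x) j.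
have [c ncN] := eqmod_mul_gcd n_gt0 (gN (maxn M j)).
rewrite -(fM (odo_add Hd (n * c) x)) => [|k kM].
  by rewrite odo_commuteM // (coord_odo_add_eqmod _ (leq_maxr M j) ncN).
by rewrite (coord_odo_add_eqmod _ (leq_trans kM (leq_maxl M j)) ncN).
Qed.

Lemma gcdn_chain_stable n :
  0 < n -> exists K0, forall K, gcdn n (p K) %| gcdn n (p K0).
Proof.
move=> n_gt0.
have [K0 maxK0] : exists K0, forall K, gcdn n (p K) <= gcdn n (p K0).
  by apply: (bounded_has_max (b := n)) => K; rewrite dvdn_leq ?dvdn_gcdl.
exists K0 => K; set L := maxn K K0.
have gcdn_mono i : i <= L -> gcdn n (p i) %| gcdn n (p L).
  move=> iL; rewrite dvdn_gcd dvdn_gcdl /=.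
  exact: dvdn_trans (dvdn_gcdr _ _) (dvdn_chain Hd iL).
have -> : gcdn n (p K0) = gcdn n (p L).
  apply/eqP; rewrite eqn_leq maxK0 dvdn_leq ?gcdn_mono ?leq_maxr //.
  by rewrite gcdn_gt0 n_gt0.
by rewrite gcdn_mono ?leq_maxl.
Qed.

End Odometer.

Lemma scale_equiv_dvd p s d K : is_scale p -> is_scale s -> scale_equiv p s ->
  d %| p K -> exists m, d %| s m.
Proof.
move=> Hp Hs ps dK.
have d_gt0 : 0 < d := dvdn_gt0 (scale_gt0 Hp K) dK.
have [m dm] : exists m, forall q, q \in primes d -> logn q d <= logn q (s m).
  apply: eventually_all => [q i j ij dq | q].
    exact: leq_trans dq (dvdn_leq_log _ (scale_gt0 Hs j) (dvdn_chain (scale_dvd Hs) ij)).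
  rewrite mem_primes => /andP [q_pr _]; apply/(ps q q_pr); exists K.
  exact: dvdn_leq_log (scale_gt0 Hp K) dK.
exists m; apply/(dvdn_partP _ d_gt0) => q qd.
have q_pr : prime q by move: qd; rewrite /= mem_primes => /andP [].
by rewrite p_part pfactor_dvdn ?scale_gt0 ?dm.
Qed.

Lemma odo_Aut_inf_scale p (Hp : is_scale p) s : is_scale s -> scale_equiv p s ->
  forall f, odo_Aut_inf (odo_add (scale_dvd Hp) 1) f <->
            exists n, odo_Aut (odo_add (scale_dvd Hp) (s n)) f.
Proof.
move=> Hs ps f; set Hd := scale_dvd Hp; split.
  move=> [n [n_gt0 [f_homeo f_iter]]].
  have fn : odo_commute Hd f n by move=> x; rewrite -!iter_odo_add1.
  have [K0 gK0] := gcdn_chain_stable Hd n_gt0.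
  have [m gm] := scale_equiv_dvd Hp Hs ps (dvdn_gcdr n (p K0)).
  exists m; split => //.
  have [_ [_ [_ [f_cont _]]]] := f_homeo.
  by apply: (odo_commute_gcd n_gt0 f_cont fn) => K; apply: dvdn_trans (gK0 K) gm.
move=> [m [f_homeo fm]]; exists (s m); split; first exact: scale_gt0.
by split=> // x; rewrite !iter_odo_add1 fm.
Qed.

Theorem corollary3p3 (p : nat -> nat) (Hp : is_scale p) :
  (forall f : odo p -> odo p,
     odo_Aut_inf (odo_add (scale_dvd Hp) 1) f <->
     exists n, odo_Aut (odo_add (scale_dvd Hp) (p n)) f) /\
  (forall s : nat -> nat, is_scale s -> scale_equiv p s ->
   forall f : odo p -> odo p,
     odo_Aut_inf (odo_add (scale_dvd Hp) 1) f <->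
     exists n, odo_Aut (odo_add (scale_dvd Hp) (s n)) f).
Proof.
split; last exact: odo_Aut_inf_scale.
by apply: odo_Aut_inf_scale => // q _ k.
Qed.
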